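(* Let $Q$ be an $n\times n$ real symmetric matrix, $\Delta_n := \{x \in \mathbb{R}^n : x \ge 0,\ \sum_{j} x_j = 1\}$, and $\nu(Q) := \min_{x\in\Delta_n} x^TQx$. Let $\ell \in \mathbb{R}$ be any lower bound on $\nu(Q)$, and define $M_j = \max_{i=1,\ldots,n} Q_{ij} - \ell$ for $j=1,\ldots,n$. Let $U_1,\ldots,U_n$ satisfy $U_j \ge M_j$ for all $j$. Consider the mixed integer linear program (MILP2) in variables $x, z \in \mathbb{R}^n$, $y \in \{0,1\}^n$, $\alpha \in \mathbb{R}$: \[ \min\ \alpha \quad \text{s.t.}\quad e_j^TQx \le \alpha + z_j\ (j=1,\ldots,n),\quad e^Tx = 1,\quad x_j \le y_j\ (j=1,\ldots,n),\quad z_j \le U_j(1-y_j)\ (j=1,\ldots,n),\quad x \ge 0,\ z \ge 0,\ y_j \in \{0,1\}\ (j=1,\ldots,n), \] where $e_j$ is the $j$-th unit vector and $e$ the all-ones vector. Then (MILP2) is an equivalent reformulation of the problem $\min\{x^TQx : x \in \Delta_n\}$; in particular, the optimal value of (MILP2) equals $\nu(Q)$. *)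

From HB Require Import structures.
From mathcomp Require Import all_boot all_order all_algebra.
From mathcomp Require Import classical_sets reals.
Set Implicit Arguments. Unset Strict Implicit. Unset Printing Implicit Defensive.
Import Order.TTheory GRing.Theory Num.Theory.
Local Open Scope ring_scope.
Local Open Scope classical_set_scope.

Definition simplex {R : realType} {n : nat} (x : 'cV[R]_n) : Prop :=
  (forall j, 0 <= x j 0) /\ \sum_(j < n) x j 0 = 1.

Definition quad {R : realType} {n : nat} (Q : 'M[R]_n) (x : 'cV[R]_n) : R :=
  (x^T *m Q *m x) 0 0.

(* nu(Q) = min_{x in Delta_n} x^T Q x, taken as the infimum (attained by compactness) *)
Definition nu {R : realType} {n : nat} (Q : 'M[R]_n) : R :=
  inf [set quad Q x | x in [set x : 'cV[R]_n | simplex x]].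

(* M_j = max_i Q_ij - l  (Q j j is only the neutral seed; it is one of the terms) *)
Definition Mj {R : realType} {n : nat} (Q : 'M[R]_n) (l : R) (j : 'I_n) : R :=
  \big[Num.max/Q j j]_(i < n) Q i j - l.

Definition milp2_feas {R : realType} {n : nat} (Q : 'M[R]_n) (U : 'I_n -> R)
  (x z y : 'cV[R]_n) (alpha : R) : Prop :=
  (forall j, (Q *m x) j 0 <= alpha + z j 0) /\
  (\sum_(j < n) x j 0 = 1) /\
  (forall j, x j 0 <= y j 0) /\
  (forall j, z j 0 <= U j * (1 - y j 0)) /\
  (forall j, 0 <= x j 0) /\
  (forall j, 0 <= z j 0) /\
  (forall j, y j 0 = 0 \/ y j 0 = 1).

From HB Require Import structures.
From mathcomp Require Import all_boot all_order all_algebra.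
From mathcomp Require Import boolp classical_sets reals topology normedtype derive.
From mathcomp Require Import ring.
Set Implicit Arguments. Unset Strict Implicit. Unset Printing Implicit Defensive.
Import Order.TTheory GRing.Theory Num.Theory numFieldNormedType.Exports.
Local Open Scope ring_scope.
Local Open Scope classical_set_scope.

(* At a feasible point (x, z, y, alpha) of (MILP2), x_j > 0 forces y_j = 1 and
   hence z_j = 0, so (Q x)_j <= alpha on the support of x; averaging with the
   weights x_j gives x^T Q x <= alpha, whence alpha >= nu(Q).
   Conversely, a minimiser x of x^T Q x over the simplex (it exists by
   compactness) satisfies the first-order condition (Q x)_j >= nu(Q) for every
   j, with equality on the support of x because x^T Q x is the x-weighted mean
   of the (Q x)_j.  Setting y_j = 1 exactly where (Q x)_j = nu(Q) and
   z_j = (Q x)_j - nu(Q) yields a feasible point with alpha = nu(Q); where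
   y_j = 0 the bound z_j <= U_j holds since (Q x)_j <= max_i Q_ij and
   l <= nu(Q). *)

Lemma ge0_affine_near0 (R : realFieldType) (b c : R) :
  (forall t, 0 < t <= 1 -> 0 <= b + t * c) -> 0 <= b.
Proof.
move=> bct; apply/ler_addgt0Pr => e e0.
have ec0 : 0 < e + `|c| by rewrite ltr_pwDl.
pose t := e / (e + `|c|).
have t0 : 0 < t by exact: divr_gt0.
have t1 : t <= 1 by rewrite ler_pdivrMr // mul1r lerDl.
have tc : t * `|c| <= e by rewrite mulrAC ler_pdivrMr // ler_pM2l // lerDr ltW.
apply: le_trans (bct t _) _; first by rewrite t0.
rewrite lerD2l (le_trans _ tc) //.
by apply: ler_wpM2l; [exact: ltW | exact: ler_norm].
Qed.

Lemma weighted_mean_eq_lb (R : numDomainType) (I : finType) (w f : I -> R) m :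
  (forall i, 0 <= w i) -> \sum_i w i = 1 -> (forall i, m <= f i) ->
  \sum_i w i * f i = m -> forall i, w i != 0 -> f i = m.
Proof.
move=> w0 w1 mf wfm i wi0.
have terms0 : \sum_i w i * (f i - m) = 0.
  under eq_bigr do rewrite mulrBr.
  by rewrite sumrB -mulr_suml w1 mul1r wfm subrr.
have terms_ge0 j : true -> 0 <= w j * (f j - m) by rewrite mulr_ge0 ?subr_ge0.
move/eqP: (psumr_eq0P terms_ge0 terms0 (i := i) isT).
by rewrite mulf_eq0 subr_eq0 (negbTE wi0) => /eqP.
Qed.

Lemma continuous_sum (R : numFieldType) (T : topologicalType) (I : Type)
  (r : seq I) (f : I -> T -> R) :
  (forall i, continuous (f i)) -> continuous (fun t => \sum_(i <- r) f i t).
Proof.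
move=> fc; elim: r => [|i r IHr].
  by under eq_fun do rewrite big_nil; exact: cst_continuous.
under eq_fun do rewrite big_cons.
by move=> t; apply: continuousD; [exact: fc | exact: IHr].
Qed.

Section Simplex.
Variables (R : realType) (n : nat).
Implicit Types (x y : 'cV[R]_n) (Q : 'M[R]_n).

Lemma simplex_delta (j : 'I_n) : simplex (delta_mx j 0 : 'cV[R]_n).
Proof.
split=> [k|]; first by rewrite mxE ler0n.
rewrite (bigD1 j) //= big1 => [|k /negbTE kj]; first by rewrite mxE !eqxx addr0.
by rewrite mxE kj.
Qed.

Lemma simplex_segment x y t :
  simplex x -> simplex y -> 0 <= t <= 1 -> simplex (x + t *: (y - x)).
Proof.
move=> [x0 x1] [y0 y1] /andP[t0 t1].
have xyE k : (x + t *: (y - x)) k 0 = (1 - t) * x k 0 + t * y k 0.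
  by rewrite !mxE; ring.
split=> [k|]; first by rewrite xyE addr_ge0 ?mulr_ge0 ?subr_ge0.
under eq_bigr do rewrite xyE.
by rewrite big_split /= -!mulr_sumr x1 y1 !mulr1 subrK.
Qed.

Lemma quad_mulmx Q x : quad Q x = \sum_k x k 0 * (Q *m x) k 0.
Proof. by rewrite /quad -mulmxA mxE; apply: eq_bigr => k _; rewrite mxE. Qed.

Lemma form_delta Q x (j : 'I_n) :
  ((delta_mx j 0 : 'cV[R]_n)^T *m Q *m x) 0 0 = (Q *m x) j 0.
Proof. by rewrite trmx_delta -mulmxA -rowE mxE. Qed.

Lemma form_sym Q x y : Q^T = Q -> (x^T *m Q *m y) 0 0 = (y^T *m Q *m x) 0 0.
Proof.
move=> sQ; have -> : (x^T *m Q *m y) 0 0 = (x^T *m Q *m y)^T 0 0 by rewrite [RHS]mxE.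
by rewrite !trmx_mul trmxK sQ mulmxA.
Qed.

Lemma quad_line Q x y t : Q^T = Q ->
  quad Q (x + t *: y) = quad Q x + t * (2 * (y^T *m Q *m x) 0 0 + t * quad Q y).
Proof.
move=> sQ; rewrite /quad [(x + _)^T]linearD /= [(t *: y)^T]linearZ /=.
rewrite !mulmxDl !mulmxDr -!scalemxAl -!scalemxAr.
have := form_sym x y sQ.
move: (x^T *m Q *m x) (x^T *m Q *m y) (y^T *m Q *m x) (y^T *m Q *m y) => a b b' c.
by rewrite !mxE => ->; ring.
Qed.

Lemma quad_sum Q x : quad Q x = \sum_i \sum_k x i 0 * (Q i k * x k 0).
Proof.
rewrite quad_mulmx; apply: eq_bigr => i _.
by rewrite mxE mulr_sumr.
Qed.

Lemma simplex_min_kkt Q x : Q^T = Q -> simplex x ->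
  (forall y, simplex y -> quad Q x <= quad Q y) ->
  forall j, quad Q x <= (Q *m x) j 0.
Proof.
move=> sQ sx xmin j; pose d := delta_mx j 0 - x.
have dQx : (d^T *m Q *m x) 0 0 = (Q *m x) j 0 - quad Q x.
  by rewrite /d [(_ - x)^T]linearB /= !mulmxBl [LHS]mxE [X in _ + X]mxE form_delta.
suff : 0 <= 2 * (d^T *m Q *m x) 0 0.
  by rewrite dQx pmulr_rge0 // subr_ge0.
(* by [quad_line], q(x + t d) - q(x) = t (2 d^T Q x + t q(d)) *)
apply: (@ge0_affine_near0 _ _ (quad Q d)) => t /andP[t0 t1].
have seg : simplex (x + t *: d).
  by apply: simplex_segment sx (simplex_delta j) _; rewrite ltW.
by have := xmin _ seg; rewrite quad_line // lerDl pmulr_rge0.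
Qed.

Lemma mulmx_simplex_le_bigmax Q x (j : 'I_n) c : simplex x ->
  (Q *m x) j 0 <= \big[Num.max/c]_i Q j i.
Proof.
move=> [x0 x1]; rewrite mxE -[X in _ <= X]mulr1 -x1 mulr_sumr.
by apply: ler_sum => i _; rewrite ler_wpM2r // le_bigmax.
Qed.

(* Row vectors, because that is where [rV_compact] (Tychonoff) is available. *)
Lemma compact_simplex_rV : compact [set v : 'rV[R]_n | simplex v^T].
Proof.
have -> : [set v : 'rV[R]_n | simplex v^T] =
    (\bigcap_(j in setT) [set v : 'rV[R]_n | 0 <= v ord0 j]) `&`
    ((fun v : 'rV[R]_n => \sum_j v ord0 j) @^-1` [set 1]).
  have sumE (v : 'rV[R]_n) : \sum_j v^T j 0 = \sum_j v ord0 j.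
    by apply: eq_bigr => j _; rewrite mxE.
  apply/seteqP; split=> v /=; rewrite /simplex sumE.
    by case=> v0 v1; split=> // j _; have := v0 j; rewrite mxE.
  by case=> v0 v1; split=> // j; rewrite mxE; exact: v0.
apply: (subclosed_compact _ (rV_compact (fun=> @segment_compact R 0 1))).
  apply: closedI.
    apply: closed_bigI => j _.
    apply: (@preimage_closed _ _ (fun v : 'rV[R]_n => v ord0 j) [set x | 0 <= x]).
      by move=> v _; exact: coord_continuous.
    exact: closed_ge.
  apply: preimage_closed; last exact: closed_eq.
  by move=> v _; apply: continuous_sum => j; exact: coord_continuous.
move=> v [/= v0 v1] j; rewrite in_itv /= v0 // -v1.
by rewrite (bigD1 j) //= lerDl sumr_ge0 // => k _; exact: v0.
Qed.

Lemma quad_simplex_min Q : (0 < n)%N ->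
  exists2 x, simplex x & forall y, simplex y -> quad Q x <= quad Q y.
Proof.
move=> n_gt0.
have quad_cont : continuous (fun v : 'rV[R]_n => quad Q v^T).
  rewrite (_ : (fun v : 'rV[R]_n => quad Q v^T) =
               fun v => \sum_i \sum_k v ord0 i * (Q i k * v ord0 k)).
    apply: continuous_sum => i; apply: continuous_sum => k v.
    apply: (@continuousM _ _ (fun v : 'rV[R]_n => v ord0 i)).
      exact: coord_continuous.
    apply: (@continuousM _ _ (fun=> Q i k)); first exact: cst_continuous.
    exact: coord_continuous.
  apply/funext => v; rewrite quad_sum.
  by apply: eq_bigr => i _; apply: eq_bigr => k _; rewrite !mxE.
have simplex_ne0 : [set v : 'rV[R]_n | simplex v^T] !=set0.
  by exists (delta_mx (Ordinal n_gt0) 0 : 'cV[R]_n)^T; rewrite /= trmxK; exact: simplex_delta.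
have [c] := compact_EVT_min simplex_ne0 compact_simplex_rV (continuous_subspaceT quad_cont).
rewrite inE => sc cmin; exists c^T => // y sy.
by rewrite -(trmxK y); apply: cmin; rewrite inE /= trmxK.
Qed.

Lemma nu_min Q x : simplex x ->
  (forall y, simplex y -> quad Q x <= quad Q y) -> nu Q = quad Q x.
Proof.
move=> sx xmin; apply/le_anti/andP; split.
  by apply: ge_inf; [exists (quad Q x) => _ [y sy <-]; exact: xmin | exists x].
by apply: lb_le_inf; [exists (quad Q x), x | move=> _ [y sy <-]; exact: xmin].
Qed.

End Simplex.

Section MILP2.
Variables (R : realType) (n : nat).
Implicit Types (x z y : 'cV[R]_n) (Q : 'M[R]_n).

Lemma milp2_feas_simplex Q U x z y alpha :
  milp2_feas Q U x z y alpha -> simplex x.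
Proof. by case=> _ [x1 [_ [_ [x0 _]]]]; split. Qed.

Lemma milp2_feas_quad_le Q U x z y alpha :
  milp2_feas Q U x z y alpha -> quad Q x <= alpha.
Proof.
move=> [Qxz [x1 [xy [zU [x0 [z0 y01]]]]]].
rewrite quad_mulmx -[alpha]mulr1 -x1 mulr_sumr; apply: ler_sum => k _.
have [->|xk0] := eqVneq (x k 0) 0; first by rewrite mul0r mulr0.
have yk1 : y k 0 = 1.
  case: (y01 k) => // yk0; move: (xy k) (x0 k); rewrite yk0 => xk_le0 xk_ge0.
  by move: xk0; rewrite eq_le xk_le0 xk_ge0.
have zk0 : z k 0 = 0.
  by apply/eqP; rewrite eq_le z0 andbT; move: (zU k); rewrite yk1 subrr mulr0.
by rewrite mulrC ler_wpM2r // -[alpha]addr0 -zk0.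
Qed.

Lemma milp2_feas_of_kkt Q (l : R) U x : Q^T = Q ->
  (forall j, Mj Q l j <= U j) -> l <= quad Q x -> simplex x ->
  (forall j, quad Q x <= (Q *m x) j 0) ->
  exists z y, milp2_feas Q U x z y (quad Q x).
Proof.
move=> sQ MU lq sx kkt; set q := quad Q x.
have supp j : x j 0 != 0 -> (Q *m x) j 0 = q.
  apply: (weighted_mean_eq_lb (w := fun i => x i 0) (f := fun i => (Q *m x) i 0) sx.1 sx.2 kkt).
  by rewrite /q quad_mulmx.
have vmax j : (Q *m x) j 0 <= \big[Num.max/Q j j]_i Q i j.
  rewrite (eq_bigr (fun i => Q j i)) => [|i _]; last by rewrite -[in LHS]sQ mxE.
  exact: mulmx_simplex_le_bigmax.
rewrite /milp2_feas; set v := Q *m x in kkt supp vmax *; clearbody v.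
exists (\col_j (v j 0 - q)), (\col_j (v j 0 == q)%:R).
split; [|split; [exact: sx.2|split; [|split; [|split; [exact: sx.1|split]]]]].
- by move=> j; rewrite mxE addrC subrK.
- move=> j; rewrite mxE; have [_|vjq] := eqVneq.
    by rewrite -sx.2 (bigD1 j) //= lerDl sumr_ge0 // => k _; exact: sx.1.
  suff /eqP -> : x j 0 == 0 by [].
  by apply: contraNT vjq => /supp ->.
- move=> j; rewrite !mxE; have [->|_] := eqVneq; first by rewrite !subrr mulr0.
  rewrite subr0 mulr1; apply: le_trans (MU j); exact: lerB (vmax j) lq.
- by move=> j; rewrite mxE subr_ge0.
- by move=> j; rewrite mxE; case: eqP; [right | left].
Qed.

End MILP2.

Theorem proposition2 (R : realType) (n : nat) (Q : 'M[R]_n) (l : R)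
  (U : 'I_n -> R) :
  (0 < n)%N -> Q^T = Q ->
  (forall x : 'cV[R]_n, simplex x -> l <= quad Q x) ->
  (forall j, Mj Q l j <= U j) ->
  [/\ (* the optimal value of (MILP2) is attained and equals nu(Q) *)
      (exists x z y : 'cV[R]_n, milp2_feas Q U x z y (nu Q)),
      (forall (x z y : 'cV[R]_n) (alpha : R), milp2_feas Q U x z y alpha -> nu Q <= alpha) &
      (* equivalence of optimal solutions *)
      (forall x : 'cV[R]_n,
         (simplex x /\ quad Q x = nu Q) <->
         (exists z y : 'cV[R]_n, milp2_feas Q U x z y (nu Q)))].
Proof.
move=> n_gt0 sQ l_le MU.
have [xs sxs xs_min] := quad_simplex_min Q n_gt0.
have nuE := nu_min sxs xs_min.
have optimal_feas x : simplex x -> quad Q x = nu Q ->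
    exists z y, milp2_feas Q U x z y (nu Q).
  move=> sx qx; rewrite -qx.
  apply: milp2_feas_of_kkt sQ MU (l_le x sx) sx (simplex_min_kkt sQ sx _).
  by move=> y sy; rewrite qx nuE xs_min.
have feas_bounds x z y alpha :
    milp2_feas Q U x z y alpha -> quad Q x <= alpha /\ nu Q <= quad Q x.
  move=> feas; split; first exact: milp2_feas_quad_le feas.
  by rewrite nuE xs_min //; exact: milp2_feas_simplex feas.
split.
- by have [z [y feas]] := optimal_feas xs sxs (esym nuE); exists xs, z, y.
- by move=> x z y alpha /feas_bounds[qa nq]; exact: le_trans qa.
- move=> x; split=> [[sx qx] | [z [y feas]]]; first exact: optimal_feas.
  have [qa nq] := feas_bounds _ _ _ _ feas.
  by split; [exact: milp2_feas_simplex feas | apply/le_anti; rewrite qa nq].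
Qed.
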